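(* Let $P=P(m_1,\dots,m_{n-1})$ be a natural unit interval order with $m_1=r$ for some $r\le n-1$ and $m_2=\cdots=m_{n-1}=n$, and let $G=\mathrm{inc}(P)$. Then $$X_G(\mathbf{x},t)=[n-2]_t!\left([n]_t[r-1]_t\,e_n+t^{r-1}[n-r]_t\,e_{(n-1,1)}\right).$$
   Context: A natural unit interval order $P(m_1,\dots,m_{n-1})$ is defined for integers $m_1\le\cdots\le m_{n-1}\le n$ with $m_i\ge i$: it is the poset on $[n]$ with $i<_P j$ iff $i<n$ and $j\in\{m_i+1,\dots,n\}$. Its incomparability graph has vertex set $[n]$ and an edge $\{i,j\}$ ($i<j$) iff $j\le m_i$. The chromatic quasisymmetric function of a graph $G$ on $V\subset\mathbb{P}$ is $X_G(\mathbf{x},t)=\sum_\kappa t^{\mathrm{asc}(\kappa)}\prod_v x_{\kappa(v)}$ over proper colorings $\kappa:V\to\mathbb{P}$, with $\mathrm{asc}(\kappa)$ the number of edges $\{i,j\}$, $i<j$, with $\kappa(i)<\kappa(j)$. $[m]_t=1+t+\cdots+t^{m-1}$, $[m]_t!=[1]_t\cdots[m]_t$; $e_\lambda$ denotes elementary symmetric functions. *)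

From mathcomp Require Import all_boot all_order all_algebra.
From mathcomp Require Import mpoly.
Set Implicit Arguments. Unset Strict Implicit. Unset Printing Implicit Defensive.
Import GRing.Theory.
Local Open Scope ring_scope.

(* Natural unit interval order P(m_1,...,m_{n-1}) on [n] = {1,...,n}:
   the sequence m : nat -> nat is only consulted at 1..n-1. *)
Definition is_nuio_seq (n : nat) (m : nat -> nat) : Prop :=
  (forall i, (1 <= i <= n.-1)%N -> (i <= m i <= n)%N) /\
  (forall i, (1 <= i < n.-1)%N -> (m i <= m i.+1)%N).

(* Vertices of inc(P) are 1..n, represented by v : 'I_n standing for v+1.
   Edge {i,j} with i<j iff j <= m_i. *)
Definition inc_edge (n : nat) (m : nat -> nat) (u v : 'I_n) : bool :=
  ((u < v)%N && (v.+1 <= m u.+1)%N).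

(* proper colorings with colours 1..N (represented by 'I_N, order preserved) *)
Definition proper_col (n N : nat) (m : nat -> nat) (k : {ffun 'I_n -> 'I_N}) : bool :=
  [forall u : 'I_n, forall v : 'I_n, inc_edge m u v ==> (k u != k v)].

Definition asc (n N : nat) (m : nat -> nat) (k : {ffun 'I_n -> 'I_N}) : nat :=
  #|[set p : 'I_n * 'I_n | inc_edge m p.1 p.2 && (k p.1 < k p.2)%N]|.

(* X_G(x_1,...,x_N, t), the chromatic quasisymmetric function of G = inc(P(m))
   with all variables x_i, i > N, set to 0; coefficients in Z[t]. *)
Definition chromQS (n : nat) (m : nat -> nat) (N : nat) : {mpoly {poly int}[N]} :=
  \sum_(k : {ffun 'I_n -> 'I_N} | proper_col m k)
     ('X ^+ asc m k) *: \prod_(v : 'I_n) 'X_(k v).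

Definition qint (k : nat) : {poly int} := \sum_(i < k) 'X ^+ i.
Definition qfact (k : nat) : {poly int} := \prod_(i < k) qint i.+1.

From mathcomp Require Import all_boot all_order all_algebra.
From mathcomp Require Import mpoly.
From mathcomp Require Import fingroup perm.
From mathcomp Require Import zify ring.
Set Implicit Arguments. Unset Strict Implicit. Unset Printing Implicit Defensive.
Import GRing.Theory.
Local Open Scope ring_scope.

(* Write Y_s for X_G of the order P(s, n, ..., n): vertex 1 is adjacent to
   2, ..., s and the vertices 2, ..., n form a clique; the theorem computes Y_r.
   Exchanging the colours of the vertices s and s+1 pairs the colourings of
   the three graphs with s-1, s, s+1 and proves the modular law
   (1 + t) Y_s = t Y_(s-1) + Y_(s+1), so s |-> Y_s is affine in [s-1]_t.
   At the ends, Y_n = [n]_t! e_n is a complete graph and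
   Y_1 = [n-1]_t! e_(n-1) e_1 adds an isolated vertex to one, both by q-counting
   the injective colourings of a clique by their coinversions.  Eliminating
   Y_2 - Y_1 between s = r and s = n gives the formula. *)

Lemma qintD a b : qint (a + b) = qint a + 'X ^+ a * qint b.
Proof.
rewrite /qint big_split_ord /= mulr_sumr.
by congr (_ + _); apply: eq_bigr => i _; rewrite exprD.
Qed.

Lemma qint1 : qint 1 = 1.
Proof. by rewrite /qint big_ord1. Qed.

Lemma qint_neq0 n : (0 < n)%N -> qint n != 0.
Proof.
case: n => // n _; rewrite -add1n qintD qint1 expr1.
apply/eqP => /(congr1 (fun p : {poly int} => p`_0)).
by rewrite coefD coef1 coefXM coef0 addr0 => /eqP; rewrite oner_eq0.
Qed.

Lemma qfactS p : qfact p.+1 = qfact p * qint p.+1.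
Proof. by rewrite /qfact big_ord_recr. Qed.

Lemma modular_recurrence_sol (V : lmodType {poly int}) (Y : nat -> V) n :
  (forall s, (2 <= s <= n)%N -> (1 + 'X) *: Y s = 'X *: Y s.-1 + Y s.+1) ->
  forall s, (1 <= s <= n.+1)%N -> Y s = Y 1%N + qint s.-1 *: (Y 2%N - Y 1%N).
Proof.
move=> rec.
have diff s : (1 <= s <= n)%N -> Y s.+1 - Y s = 'X ^+ s.-1 *: (Y 2%N - Y 1%N).
  elim: s => // -[_ _|s IH hs]; first by rewrite scale1r.
  rewrite -[Y s.+3](addKr ('X *: Y s.+1)) -(rec s.+2); last by lia.
  rewrite scalerDl scale1r [Y s.+2 + _]addrC addrA addrK addrC -scalerBr.
  by rewrite IH ?scalerA -?exprS //; lia.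
move=> s hs; apply/eqP; rewrite addrC -subr_eq.
rewrite -(@telescope_sumr_eq _ 1 s Y (fun i => 'X ^+ i.-1 *: (Y 2%N - Y 1%N))).
- by rewrite -scaler_suml /qint big_add1 big_mkord.
- by case/andP: hs.
- by move=> i hi; rewrite [RHS]diff //; lia.
Qed.

Lemma card_predU1 (T : finType) (E F L : pred T) x :
  (forall p, E p = F p || (p == x)) -> ~~ F x ->
  #|[set p | E p && L p]| = (#|[set p | F p && L p]| + L x)%N.
Proof.
move=> EF Fx; case Lx: (L x); last first.
  rewrite addn0; apply: eq_card => p; rewrite !inE EF.
  by case: eqVneq => [->|]; rewrite ?Lx ?andbF ?orbF.
have -> : [set p | E p && L p] = x |: [set p | F p && L p].
  apply/setP => p; rewrite !inE EF.
  by case: eqVneq => [->|]; rewrite ?Lx ?orbT ?orbF.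
by rewrite cardsU1 inE (negbTE Fx) addnC.
Qed.

Lemma card_predU1_swap (T : finType) (E E' L : pred T) x y :
  x != y -> (forall p, p != x -> p != y -> E' p = E p) ->
  E x -> ~~ E y -> ~~ E' x -> E' y ->
  (#|[set p | E p && L p]| + L y = #|[set p | E' p && L p]| + L x)%N.
Proof.
move=> xy E'E Ex Ey E'x E'y; pose F p := E p && (p != x).
have Fx : ~~ F x by rewrite /F eqxx andbF.
have Fy : ~~ F y by rewrite /F (negbTE Ey).
rewrite (@card_predU1 _ E F L x) => [|p|//]; last first.
  by rewrite /F; case: eqVneq => [->|]; rewrite ?Ex ?andbT ?orbF.
rewrite (@card_predU1 _ E' F L y) => [|p|//]; last first.
  rewrite /F; case: (eqVneq p x) => [->|px].
    by rewrite (negbTE E'x) andbF (negbTE xy).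
  by case: eqVneq => [->|py]; rewrite ?E'y ?orbT ?E'E ?andbT ?orbF.
by rewrite addnAC.
Qed.

Lemma card_set_perm2 (T : finType) (s : {perm T}) (P : T -> T -> bool) :
  #|[set p : T * T | P (s p.1) (s p.2)]| = #|[set p : T * T | P p.1 p.2]|.
Proof.
have inj_s2 : injective (fun p : T * T => (s p.1, s p.2)).
  by move=> [u v] [u' v'] /= [/perm_inj -> /perm_inj ->].
rewrite -[RHS](card_preimset _ inj_s2).
by apply: eq_card => p; rewrite !inE.
Qed.

Definition col_mono n N (k : {ffun 'I_n -> 'I_N}) : {mpoly {poly int}[N]} :=
  \prod_(v : 'I_n) 'X_(k v).

Definition chrom_coef n N m (k : {ffun 'I_n -> 'I_N}) : {poly int} :=
  if proper_col m k then 'X ^+ asc m k else 0.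

Lemma chromQSE n m N :
  chromQS n m N = \sum_(k : {ffun 'I_n -> 'I_N}) chrom_coef m k *: col_mono k.
Proof.
rewrite /chromQS big_mkcond /=; apply: eq_bigr => k _.
by rewrite /chrom_coef; case: ifP; rewrite ?scale0r.
Qed.

Lemma eq_chromQS n m m' N :
  (forall u v : 'I_n, inc_edge m u v = inc_edge m' u v) ->
  chromQS n m N = chromQS n m' N.
Proof.
move=> mm'; apply: eq_big => [k|k _].
  by apply: eq_forallb => u; apply: eq_forallb => v; rewrite mm'.
by congr ('X ^+ _ *: _); apply: eq_card => p; rewrite !inE mm'.
Qed.

Lemma inc_edge_asym n m (u v : 'I_n) : inc_edge m u v -> ~~ inc_edge m v u.
Proof. by rewrite /inc_edge => /andP[/ltnW uv _]; rewrite ltnNge uv. Qed.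

Lemma inc_edge0 n m (u : 'I_n.+1) : inc_edge m u ord0 = false.
Proof. by rewrite /inc_edge ltn0. Qed.

Definition edge_wt N (c d : 'I_N) : {poly int} :=
  if c == d then 0 else 'X ^+ (c < d)%N.

Section AddEdge.

Variables (n N : nat) (m m' : nat -> nat) (a b : 'I_n).
Hypothesis edge_m' : forall u v,
  inc_edge m' u v = inc_edge m u v || ((u, v) == (a, b)).
Hypothesis new_ab : ~~ inc_edge m a b.

Lemma proper_col_addedge (k : {ffun 'I_n -> 'I_N}) :
  proper_col m' k = proper_col m k && (k a != k b).
Proof.
apply/forallP/andP => [P' | [/forallP P kab] u].
  split; last by have /forallP/(_ b) := P' a; rewrite edge_m' eqxx orbT.
  apply/forallP => u; apply/forallP => v; apply/implyP => e.
  by have /forallP/(_ v) := P' u; rewrite edge_m' e.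
apply/forallP => v; rewrite edge_m'; apply/implyP => /orP[e|/eqP[-> ->] //].
by have /forallP/(_ v) := P u; rewrite e.
Qed.

Lemma asc_addedge (k : {ffun 'I_n -> 'I_N}) :
  asc m' k = (asc m k + (k a < k b))%N.
Proof.
rewrite /asc (@card_predU1 _ (fun p => inc_edge m' p.1 p.2)
  (fun p => inc_edge m p.1 p.2) (fun p => k p.1 < k p.2)%N (a, b)) //.
Qed.

Lemma chrom_coef_addedge (k : {ffun 'I_n -> 'I_N}) :
  chrom_coef m' k = edge_wt (k a) (k b) * chrom_coef m k.
Proof.
rewrite /chrom_coef /edge_wt proper_col_addedge asc_addedge.
case: eqVneq => _; rewrite ?andbF ?mul0r ?andbT //.
by case: ifP; rewrite ?mulr0 // exprD mulrC.
Qed.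

End AddEdge.

Section Transposition.

Variables (n N : nat) (m : nat -> nat) (a b : 'I_n).
Hypothesis edge_ab : inc_edge m a b.
Hypothesis edge_tperm : forall u v, (u, v) != (a, b) -> (u, v) != (b, a) ->
  inc_edge m (tperm a b u) (tperm a b v) = inc_edge m u v.

Definition swap_col (k : {ffun 'I_n -> 'I_N}) : {ffun 'I_n -> 'I_N} :=
  [ffun v => k (tperm a b v)].

Lemma swap_colK : involutive swap_col.
Proof. by move=> k; apply/ffunP => v; rewrite !ffunE tpermK. Qed.

Lemma col_mono_swap (k : {ffun 'I_n -> 'I_N}) :
  col_mono (swap_col k) = col_mono k.
Proof.
rewrite /col_mono [RHS](reindex_inj (@perm_inj _ (tperm a b))) /=.
by apply: eq_bigr => v _; rewrite ffunE.
Qed.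

Lemma proper_col_swap (k : {ffun 'I_n -> 'I_N}) :
  proper_col m (swap_col k) = proper_col m k.
Proof.
suff imp k' : proper_col m k' -> proper_col m (swap_col k').
  by apply/idP/idP => /imp; rewrite ?swap_colK.
move=> /forallP P.
have key u v : inc_edge m (tperm a b u) (tperm a b v) -> k' u != k' v.
  case: (eqVneq (u, v) (a, b)) => [[-> ->]|ne1].
    by rewrite tpermL tpermR (negbTE (inc_edge_asym edge_ab)).
  case: (eqVneq (u, v) (b, a)) => [[-> ->] _|ne2].
    by rewrite eq_sym; apply: (implyP (forallP (P a) b)).
  by rewrite edge_tperm //; apply/implyP/(forallP (P u)).
apply/forallP => u; apply/forallP => v; apply/implyP => e.
by rewrite !ffunE; apply: key; rewrite !tpermK.
Qed.

Lemma asc_swap (k : {ffun 'I_n -> 'I_N}) :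
  (k a < k b)%N -> asc m k = (asc m (swap_col k)).+1.
Proof.
move=> kab.
have -> : asc m (swap_col k) =
    #|[set p | inc_edge m (tperm a b p.1) (tperm a b p.2) && (k p.1 < k p.2)%N]|.
  rewrite -(card_set_perm2 (tperm a b)
    (fun u v => inc_edge m (tperm a b u) (tperm a b v) && (k u < k v)%N)).
  by apply: eq_card => p; rewrite !inE !tpermK !ffunE.
have a_neq_b : (a, b) != (b, a).
  by move: edge_ab; rewrite /inc_edge xpair_eqE -val_eqE => /andP[/ltn_eqF ->].
have tperm_edges p : p != (a, b) -> p != (b, a) ->
    inc_edge m (tperm a b p.1) (tperm a b p.2) = inc_edge m p.1 p.2.
  by case: p; exact: edge_tperm.
have := @card_predU1_swap _ (fun p => inc_edge m p.1 p.2)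
  (fun p => inc_edge m (tperm a b p.1) (tperm a b p.2)) (fun p => k p.1 < k p.2)%N
  (a, b) (b, a) a_neq_b tperm_edges edge_ab (inc_edge_asym edge_ab).
rewrite /= tpermL tpermR => /(_ (inc_edge_asym edge_ab) edge_ab).
by rewrite kab ltnNge (ltnW kab) addn0 addn1.
Qed.

End Transposition.

Lemma edge_wt_modular N (c p q : 'I_N) : (p < q)%N ->
  ((1 + 'X) * edge_wt c p - 'X - edge_wt c q * edge_wt c p) * 'X
  + ((1 + 'X) * edge_wt c q - 'X - edge_wt c p * edge_wt c q) = 0.
Proof.
rewrite /edge_wt -!(inj_eq val_inj) => pq.
case: (ltngtP c p) => [cp|pc|/val_inj ->].
- by rewrite (ltn_trans cp pq) (ltn_eqF (ltn_trans cp pq)) /=; ring.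
- by case: (ltngtP c q) => /= _; ring.
- by rewrite pq (ltn_eqF pq) /=; ring.
Qed.

Section ModularRelation.

Variables (n N : nat) (m0 m1 m2 : nat -> nat) (c a b : 'I_n).
Hypothesis edge_m1 : forall u v,
  inc_edge m1 u v = inc_edge m0 u v || ((u, v) == (c, a)).
Hypothesis new_ca : ~~ inc_edge m0 c a.
Hypothesis edge_m2 : forall u v,
  inc_edge m2 u v = inc_edge m1 u v || ((u, v) == (c, b)).
Hypothesis new_cb : ~~ inc_edge m1 c b.
Hypothesis edge_ab : inc_edge m0 a b.
Hypothesis edge_tperm : forall u v, (u, v) != (a, b) -> (u, v) != (b, a) ->
  inc_edge m0 (tperm a b u) (tperm a b v) = inc_edge m0 u v.
Hypothesis a_neq_c : a != c.
Hypothesis b_neq_c : b != c.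

Lemma chromQS_modular :
  (1 + 'X) *: chromQS n m1 N = 'X *: chromQS n m0 N + chromQS n m2 N.
Proof.
pose defect (k : {ffun 'I_n -> 'I_N}) :=
  (1 + 'X) * chrom_coef m1 k - 'X * chrom_coef m0 k - chrom_coef m2 k.
have defectE k : defect k = ((1 + 'X) * edge_wt (k c) (k a) - 'X
    - edge_wt (k c) (k b) * edge_wt (k c) (k a)) * chrom_coef m0 k.
  rewrite /defect (chrom_coef_addedge edge_m2) // (chrom_coef_addedge edge_m1) //.
  by ring.
have defect_eq (k : {ffun 'I_n -> 'I_N}) : k a = k b -> defect k = 0.
  move=> kab; rewrite defectE /chrom_coef.
  have /negbTE-> : ~~ proper_col m0 k.
    by apply/negP => /forallP/(_ a)/forallP/(_ b); rewrite edge_ab kab eqxx.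
  by rewrite mulr0.
have defect_pair (k : {ffun 'I_n -> 'I_N}) :
    (k a < k b)%N -> defect k + defect (swap_col a b k) = 0.
  move=> kab; rewrite !defectE.
  have -> : chrom_coef m0 k = 'X * chrom_coef m0 (swap_col a b k).
    rewrite /chrom_coef proper_col_swap // (asc_swap edge_ab) //.
    by case: ifP; rewrite ?mulr0 ?exprS.
  rewrite !ffunE tpermL tpermR (tpermD a_neq_c b_neq_c) mulrA -mulrDl.
  by rewrite edge_wt_modular ?mul0r.
suff defect_sum : \sum_k defect k *: col_mono k = 0.
  apply/eqP; rewrite -subr_eq0 opprD addrA; apply/eqP.
  rewrite -[RHS]defect_sum !chromQSE !scaler_sumr -!sumrB; apply: eq_bigr => k _.
  by rewrite !scalerBl !scalerA.
rewrite (bigID (fun k : {ffun 'I_n -> 'I_N} => k a < k b)%N) /=.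
have -> : \sum_(k : {ffun 'I_n -> 'I_N} | ~~ (k a < k b)%N) defect k *: col_mono k
        = \sum_(k : {ffun 'I_n -> 'I_N} | (k a < k b)%N)
            defect (swap_col a b k) *: col_mono k.
  rewrite [RHS](reindex_inj (can_inj (swap_colK a b))) /=.
  rewrite big_mkcond [RHS]big_mkcond; apply: eq_bigr => k _.
  rewrite !ffunE tpermL tpermR swap_colK col_mono_swap.
  by case: (ltngtP (k a) (k b)) => // /val_inj kab; rewrite defect_eq ?scale0r.
rewrite -big_split /=; apply: big1 => k kab.
by rewrite -scalerDl defect_pair ?scale0r.
Qed.

End ModularRelation.

Definition ffcons (T : finType) p (c : T) (k : {ffun 'I_p -> T}) :
    {ffun 'I_p.+1 -> T} :=
  [ffun i => if unlift ord0 i is Some j then k j else c].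

Lemma ffcons0 (T : finType) p c (k : {ffun 'I_p -> T}) : ffcons c k ord0 = c.
Proof. by rewrite ffunE unlift_none. Qed.

Lemma ffconsS (T : finType) p c (k : {ffun 'I_p -> T}) j :
  ffcons c k (lift ord0 j) = k j.
Proof. by rewrite ffunE liftK. Qed.

Lemma big_ffcons (T : finType) (V : nmodType) p (F : {ffun 'I_p.+1 -> T} -> V) :
  \sum_(k : {ffun 'I_p.+1 -> T}) F k =
  \sum_(c : T) \sum_(k : {ffun 'I_p -> T}) F (ffcons c k).
Proof.
rewrite pair_big /= (reindex (fun ck : T * {ffun 'I_p -> T} => ffcons ck.1 ck.2)) //=.
apply: onW_bij.
exists (fun k : {ffun 'I_p.+1 -> T} => (k ord0, [ffun j => k (lift ord0 j)])).
  move=> [c k] /=; rewrite ffcons0; congr (_, _).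
  by apply/ffunP => j; rewrite ffunE ffconsS.
move=> k; apply/ffunP => i; rewrite ffunE.
by case: (unliftP ord0 i) => [j ->|->]; rewrite ?ffunE.
Qed.

Definition rank_in N (S : {set 'I_N}) (c : 'I_N) : nat :=
  #|[set s in S | (c < s)%N]|.

Lemma rank_in_lt N (S : {set 'I_N}) c : c \in S -> (rank_in S c < #|S|)%N.
Proof.
move=> cS; apply/proper_card/properP; split.
  by apply/subsetP => s; rewrite inE => /andP[].
by exists c => //; rewrite inE ltnn andbF.
Qed.

Lemma rank_in_inj N (S : {set 'I_N}) : {in S &, injective (rank_in S)}.
Proof.
have lt_rank c d : c \in S -> d \in S -> (c < d)%N -> (rank_in S d < rank_in S c)%N.
  move=> cS dS cd; apply/proper_card/properP; split.
    by apply/subsetP => s; rewrite !inE => /andP[-> /(ltn_trans cd)].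
  by exists d; rewrite !inE ?dS ?cd // ltnn andbF.
move=> c d cS dS e; apply: val_inj; case: (ltngtP c d) => // cd.
  by have := lt_rank _ _ cS dS cd; rewrite e ltnn.
by have := lt_rank _ _ dS cS cd; rewrite e ltnn.
Qed.

Lemma sum_rank_in N (S : {set 'I_N}) :
  \sum_(c in S) ('X : {poly int}) ^+ rank_in S c = qint #|S|.
Proof.
rewrite -big_enum -(big_map (rank_in S) xpredT (fun i => 'X ^+ i)) /qint.
rewrite -(big_mkord xpredT (fun i => 'X ^+ i)) /index_iota subn0; apply: perm_big.
have uniq_rank : uniq (map (rank_in S) (enum S)).
  by rewrite map_inj_in_uniq ?enum_uniq // => c d; rewrite !mem_enum; apply: rank_in_inj.
have rank_sub : {subset map (rank_in S) (enum S) <= iota 0 #|S|}.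
  by move=> x /mapP[c]; rewrite mem_enum => cS ->; rewrite mem_iota add0n rank_in_lt.
have [|_ rank_eq] := uniq_min_size uniq_rank rank_sub.
  by rewrite size_iota size_map -cardE.
exact: uniq_perm uniq_rank (iota_uniq _ _) rank_eq.
Qed.

Lemma big_card_setU1 N (V : nmodType) p (F : {set 'I_N} -> 'I_N -> V) :
  \sum_(S : {set 'I_N} | #|S| == p) \sum_(c | c \notin S) F S c =
  \sum_(T : {set 'I_N} | #|T| == p.+1) \sum_(c in T) F (T :\ c) c.
Proof.
rewrite (exchange_big_dep xpredT) //= [RHS](exchange_big_dep xpredT) //=.
apply: eq_bigr => c _.
rewrite [RHS](reindex_onto (fun S => c |: S) (fun T => T :\ c)) /=; last first.
  by move=> T /andP[_ cT]; rewrite setD1K.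
apply: eq_big => [S|S /andP[_ cS]]; last by rewrite setU1K.
case: (boolP (c \in S)) => cS /=.
  rewrite andbF; apply/esym/negbTE/negP => /andP[_ /eqP S_eq].
  by move: cS; rewrite -S_eq !inE eqxx.
by rewrite setU1K // eqxx cardsU1 cS setU11 /= !andbT.
Qed.

Lemma sum_rank_setU1 N (V : lmodType {poly int}) p (g : {set 'I_N} -> V) :
  \sum_(S : {set 'I_N} | #|S| == p)
     \sum_(c | c \notin S) 'X ^+ rank_in S c *: g (c |: S) =
  qint p.+1 *: \sum_(T : {set 'I_N} | #|T| == p.+1) g T.
Proof.
rewrite (big_card_setU1 p (fun S c => 'X ^+ rank_in S c *: g (c |: S))) scaler_sumr.
apply: eq_bigr => T /eqP cardT; rewrite -cardT -sum_rank_in scaler_suml.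
apply: eq_bigr => c cT; rewrite setD1K //; congr ('X ^+ _ *: _).
by apply: eq_card => s; rewrite !inE; case: eqVneq => [->|]; rewrite ?ltnn ?andbF.
Qed.

Definition coinv p N (k : {ffun 'I_p -> 'I_N}) : nat :=
  \sum_(u : 'I_p) \sum_(v : 'I_p) ((u < v)%N && (k u < k v)%N).

Lemma injectiveb_ffcons p N c (k : {ffun 'I_p -> 'I_N}) :
  injectiveb (ffcons c k) = injectiveb k && (c \notin [set k i | i : 'I_p]).
Proof.
apply/injectiveP/andP => [inj_ck | [/injectiveP inj_k cn] i j].
  split.
    apply/injectiveP => i j e.
    by apply/(lift_inj (h := ord0))/inj_ck; rewrite !ffconsS.
  apply/imsetP => -[j _ e]; have := inj_ck ord0 (lift ord0 j).
  by rewrite ffcons0 ffconsS => /(_ e) /eqP; rewrite (negbTE (neq_lift _ _)).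
case: (unliftP ord0 i) => [i' ->|->]; case: (unliftP ord0 j) => [j' ->|->];
  rewrite ?ffcons0 ?ffconsS // => e.
- by rewrite (inj_k _ _ e).
- by case/imsetP: cn; exists i'.
- by case/imsetP: cn; exists j'.
Qed.

Lemma imset_ffcons p N c (k : {ffun 'I_p -> 'I_N}) :
  [set ffcons c k i | i : 'I_p.+1] = c |: [set k i | i : 'I_p].
Proof.
apply/setP => s; rewrite !inE.
apply/imsetP/orP => [[i _ ->]|[/eqP ->|/imsetP[i _ ->]]].
- case: (unliftP ord0 i) => [i' ->|->]; last by left; rewrite ffcons0.
  by right; rewrite ffconsS; apply: imset_f.
- by exists ord0; rewrite ?ffcons0.
- by exists (lift ord0 i); rewrite ?ffconsS.
Qed.

Lemma coinv_ffcons p N c (k : {ffun 'I_p -> 'I_N}) :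
  coinv (ffcons c k) = (\sum_(j : 'I_p) (c < k j)%N + coinv k)%N.
Proof.
rewrite /coinv big_ord_recl big_ord_recl /= ffcons0 add0n; congr (_ + _)%N.
  by apply: eq_bigr => j _; rewrite ffconsS.
apply: eq_bigr => i _; rewrite big_ord_recl /= add0n.
by apply: eq_bigr => j _; rewrite !ffconsS /bump.
Qed.

Lemma sum_lt_rank_in p N (c : 'I_N) (k : {ffun 'I_p -> 'I_N}) : injectiveb k ->
  (\sum_(j : 'I_p) (c < k j)%N)%N = rank_in [set k i | i : 'I_p] c.
Proof.
move/injectiveP => inj_k.
rewrite (eq_bigr (fun j => if (c < k j)%N then 1 else 0)%N) => [|j _]; last by case: ifP.
rewrite -big_mkcond sum1dep_card /rank_in -(card_imset _ inj_k).
apply: eq_card => s; rewrite !inE.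
apply/imsetP/andP => [[j] | [/imsetP[j _ ->] cj]].
  by rewrite inE => cj ->; split => //; apply: imset_f.
by exists j; rewrite ?inE.
Qed.

Lemma sum_injective_coinv N (V : lmodType {poly int}) p (g : {set 'I_N} -> V) :
  \sum_(k : {ffun 'I_p -> 'I_N} | injectiveb k)
     'X ^+ coinv k *: g [set k i | i : 'I_p] =
  qfact p *: \sum_(S : {set 'I_N} | #|S| == p) g S.
Proof.
elim: p g => [|p IH] g.
  have k0 : #|'I_0| = 0%N by rewrite card_ord.
  rewrite (big_pred1 (ffun0 k0 : {ffun 'I_0 -> 'I_N})); last first.
    move=> k /=; apply/injectiveP/eqP => [_|_ []//].
    by apply/ffunP => -[].
  rewrite (big_pred1 set0); last by move=> S /=; rewrite cards_eq0.
  rewrite /qfact big_ord0 scale1r /coinv big_ord0 expr0 scale1r.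
  by congr g; apply/setP => s; rewrite in_set0; apply/negbTE/imsetP => -[[]].
pose g' (S : {set 'I_N}) := \sum_(c | c \notin S) 'X ^+ rank_in S c *: g (c |: S).
rewrite big_mkcond big_ffcons /= exchange_big /=.
rewrite (bigID (fun k : {ffun 'I_p -> 'I_N} => injectiveb k)) /=.
rewrite [X in _ + X]big1 ?addr0 => [|k /negbTE kn]; last first.
  by apply: big1 => c _; rewrite injectiveb_ffcons kn.
transitivity (\sum_(k : {ffun 'I_p -> 'I_N} | injectiveb k)
                'X ^+ coinv k *: g' [set k i | i : 'I_p]).
  apply: eq_bigr => k kinj; rewrite /g' scaler_sumr [RHS]big_mkcond.
  apply: eq_bigr => c _; rewrite injectiveb_ffcons kinj /=; case: ifP => // cn.
  by rewrite coinv_ffcons sum_lt_rank_in // imset_ffcons exprD scalerA mulrC.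
by rewrite IH /g' sum_rank_setU1 scalerA qfactS.
Qed.

Lemma col_mono_injective p N (k : {ffun 'I_p -> 'I_N}) : injectiveb k ->
  col_mono k = \prod_(i in [set k v | v : 'I_p]) 'X_i.
Proof. by move/injectiveP => inj_k; rewrite big_imset //= => u v _ _ /inj_k. Qed.

Lemma ascE n N m (k : {ffun 'I_n -> 'I_N}) :
  asc m k = (\sum_(u : 'I_n) \sum_(v : 'I_n) (inc_edge m u v && (k u < k v)%N))%N.
Proof.
rewrite /asc -sum1dep_card pair_big /= big_mkcond /=.
by apply: eq_bigr => p _; case: (_ && _).
Qed.

Definition m_complete (n : nat) : nat -> nat := fun=> n.

Lemma inc_edge_complete n (u v : 'I_n) : inc_edge (m_complete n) u v = (u < v)%N.
Proof. by rewrite /inc_edge ltn_ord andbT. Qed.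

Lemma proper_col_complete n N (k : {ffun 'I_n -> 'I_N}) :
  proper_col (m_complete n) k = injectiveb k.
Proof.
apply/forallP/injectiveP => [P u v kuv | inj_k u].
  apply: val_inj; case: (ltngtP u v) => // uv.
    by have /forallP/(_ v) := P u; rewrite inc_edge_complete uv kuv eqxx.
  by have /forallP/(_ u) := P v; rewrite inc_edge_complete uv kuv eqxx.
apply/forallP => v; rewrite inc_edge_complete; apply/implyP => uv.
by apply: contraTneq uv => /inj_k ->; rewrite ltnn.
Qed.

Lemma chromQS_complete n N :
  chromQS n (m_complete n) N = qfact n *: mesym N {poly int} n.
Proof.
rewrite chromQSE /mesym -sum_injective_coinv [RHS]big_mkcond /=.
apply: eq_bigr => k _; rewrite /chrom_coef proper_col_complete.
case: ifP => [kinj|_]; last by rewrite scale0r.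
rewrite col_mono_injective // ascE; congr ('X ^+ _ *: _).
by apply: eq_bigr => u _; apply: eq_bigr => v _; rewrite inc_edge_complete.
Qed.

Section IsolatedVertex.

Variables (n N : nat) (m m' : nat -> nat).
Hypothesis isolated0 : forall v : 'I_n.+1, inc_edge m ord0 v = false.
Hypothesis edge_lift : forall u v : 'I_n,
  inc_edge m (lift ord0 u) (lift ord0 v) = inc_edge m' u v.

Lemma proper_col_ffcons c (k : {ffun 'I_n -> 'I_N}) :
  proper_col m (ffcons c k) = proper_col m' k.
Proof.
apply/forallP/forallP => [P u | P u].
  apply/forallP => v; have /forallP/(_ (lift ord0 v)) := P (lift ord0 u).
  by rewrite edge_lift !ffconsS.
case: (unliftP ord0 u) => [i ->|->]; apply/forallP => v; last by rewrite isolated0.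
case: (unliftP ord0 v) => [j ->|->]; last by rewrite inc_edge0.
by rewrite edge_lift !ffconsS; apply: (forallP (P i)).
Qed.

Lemma asc_ffcons c (k : {ffun 'I_n -> 'I_N}) : asc m (ffcons c k) = asc m' k.
Proof.
rewrite !ascE big_ord_recl big1 ?add0n => [|v _]; last by rewrite isolated0.
apply: eq_bigr => u _; rewrite big_ord_recl inc_edge0 add0n.
by apply: eq_bigr => v _; rewrite edge_lift !ffconsS.
Qed.

Lemma chromQS_isolated0 :
  chromQS n.+1 m N = mesym N {poly int} 1 * chromQS n m' N.
Proof.
rewrite !chromQSE big_ffcons mesym1E mulr_suml; apply: eq_bigr => c _.
rewrite mulr_sumr; apply: eq_bigr => k _.
rewrite /chrom_coef proper_col_ffcons asc_ffcons -scalerAr; congr (_ *: _).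
rewrite /col_mono big_ord_recl ffcons0; congr (_ * _).
by apply: eq_bigr => i _; rewrite ffconsS.
Qed.

End IsolatedVertex.

Definition m_fan (n s : nat) : nat -> nat := fun i => if i == 1%N then s else n.+1.

Lemma inc_edge_fan n s (u v : 'I_n.+1) :
  inc_edge (m_fan n s) u v = (u < v)%N && ((u == 0 :> nat)%N ==> (v < s)%N).
Proof.
rewrite /inc_edge /m_fan; case: u => -[|u] //= _.
by rewrite (ltn_ord v) andbT.
Qed.

Lemma inc_edge_fanS n s (u v : 'I_n.+1) : (1 <= s <= n)%N ->
  inc_edge (m_fan n s.+1) u v =
  inc_edge (m_fan n s) u v || ((u, v) == (ord0, inord s)).
Proof.
move=> hs; rewrite !inc_edge_fan xpair_eqE -!val_eqE /= inordK; last by lia.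
by case: ltnP; case: eqVneq; case: eqVneq => *; lia.
Qed.

Lemma val_tperm n (a b u : 'I_n) :
  val (tperm a b u) = if u == a then val b else if u == b then val a else val u.
Proof.
case: tpermP => [->|->|au bu]; first by rewrite eqxx.
  by rewrite eqxx; case: eqVneq => [->|].
by case: eqVneq au => // _ _; case: eqVneq bu.
Qed.

Lemma chromQS_fan_modular n N r : (2 <= r <= n)%N ->
  (1 + 'X) *: chromQS n.+1 (m_fan n r) N =
  'X *: chromQS n.+1 (m_fan n r.-1) N + chromQS n.+1 (m_fan n r.+1) N.
Proof.
case: r => // r /= hr.
have valE s : (s <= n)%N -> nat_of_ord (inord s : 'I_n.+1) = s.
  by move=> hs; rewrite inordK.
apply: (@chromQS_modular _ _ _ _ _ ord0 (inord r) (inord r.+1)).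
- by move=> u v; rewrite inc_edge_fanS //; lia.
- by rewrite inc_edge_fan /= valE ?ltnn ?andbF //; lia.
- by move=> u v; rewrite inc_edge_fanS //; lia.
- by rewrite inc_edge_fan /= valE ?ltnn ?andbF //; lia.
- by rewrite inc_edge_fan !valE //; lia.
- move=> u v; rewrite !xpair_eqE !inc_edge_fan !val_tperm -!val_eqE /= !valE; try lia.
  by do 4 case: eqVneq => ?; rewrite /=; lia.
- by rewrite -val_eqE /= valE //; lia.
- by rewrite -val_eqE /= valE //; lia.
Qed.

Lemma chromQS_fan_top n N :
  chromQS n.+1 (m_fan n n.+1) N = qfact n.+1 *: mesym N {poly int} n.+1.
Proof.
rewrite -chromQS_complete; apply: eq_chromQS => u v.
by rewrite inc_edge_fan inc_edge_complete ltn_ord implybT andbT.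
Qed.

Lemma chromQS_fan1 n N :
  chromQS n.+1 (m_fan n 1%N) N =
  qfact n *: (mesym N {poly int} n * mesym N {poly int} 1).
Proof.
rewrite (@chromQS_isolated0 _ _ _ (m_complete n)) ?chromQS_complete.
- by rewrite mulrC scalerAl.
- by move=> v; rewrite inc_edge_fan /=; case: (nat_of_ord v).
- by move=> u v; rewrite inc_edge_fan inc_edge_complete /= /bump /= andbT ltn_add2l.
Qed.

Lemma mpoly_scalerI (R : idomainType) N (c : R) : c != 0 ->
  injective (fun p : {mpoly R[N]} => c *: p).
Proof.
by move=> c_neq0 p q /=; rewrite -!mul_mpolyC; apply: mulfI; rewrite mpolyC_eq0.
Qed.

Lemma chromQS_fan n N r : (1 <= r <= n)%N ->
  chromQS n.+1 (m_fan n r) N = qfact n.-1 *: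
    ((qint n.+1 * qint r.-1) *: mesym N {poly int} n.+1
     + ('X ^+ r.-1 * qint (n.+1 - r)) *:
         (mesym N {poly int} n * mesym N {poly int} 1)).
Proof.
move=> hr; have n_gt0 : (0 < n)%N by lia.
have affine := modular_recurrence_sol (fun s hs => @chromQS_fan_modular n N s hs).
have := affine n.+1 (leqnn _); rewrite chromQS_fan_top chromQS_fan1 => top.
rewrite affine /=; last by lia.
rewrite chromQS_fan1 {affine}.
set D := _ - _ in top *.
have {}top : qint n *: D =
    qfact n.+1 *: mesym N _ n.+1 - qfact n *: (mesym N _ n * mesym N _ 1).
  by rewrite top addrC addKr.
apply: (mpoly_scalerI (qint_neq0 n_gt0)) => /=; rewrite scalerDr.
have -> : qint n *: (qint r.-1 *: D) = qint r.-1 *: (qint n *: D).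
  by rewrite !scalerA mulrC.
rewrite {}top.
have qfact_n : qfact n = qfact n.-1 * qint n.
  by case: (n) n_gt0 => // n' _; rewrite qfactS.
have qint_n : qint n = qint r.-1 + 'X ^+ r.-1 * qint (n.+1 - r).
  by rewrite -qintD; congr qint; lia.
rewrite qfactS qfact_n qint_n -!mul_mpolyC !(mpolyCD, mpolyCM, mpolyCN, mpolyCB).
ring.
Qed.

Unset Implicit Arguments.

Theorem corollary4p3 (n r : nat) (m : nat -> nat) :
  (2 <= n)%N ->
  is_nuio_seq n m ->
  (r <= n.-1)%N ->
  m 1%N = r ->
  (forall k, (2 <= k <= n.-1)%N -> m k = n) ->
  forall N : nat,
    chromQS n m N =
    qfact (n - 2) *:
      ((qint n * qint r.-1) *: mesym N {poly int} n
       + ('X ^+ r.-1 * qint (n - r)) *: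
           (mesym N {poly int} n.-1 * mesym N {poly int} 1)).
Proof.
case: n => // n n_ge2 [m_bounds _] r_le m1 m_top N.
have r_gt0 : (0 < r)%N by have /andP[] := m_bounds 1%N (n_ge2 : 1 <= n)%N; rewrite m1.
rewrite (@eq_chromQS _ _ (m_fan n r)) => [|u v]; last first.
  rewrite /inc_edge /m_fan; case: u => -[_|u _] /=; first by rewrite m1.
  by case: ltnP => //= uv; rewrite m_top //; have := ltn_ord v; lia.
by rewrite chromQS_fan ?r_gt0 // subSS subn1.
Qed.
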